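(* Let $U,V$ be unitary operators on a finite-dimensional complex Hilbert space $\mathcal H$. Then there exists a real number $x$ such that $$D(U,V)=\tfrac12\,\|U-e^{ix}V\|,$$ where $\|\cdot\|$ is the operator norm $\|A\|=\max_{\|\psi\|=1}\|A\psi\|$.
   Context: For unitary operators $U,V$ on a finite-dimensional complex Hilbert space $\mathcal H$ define the u-distance $D(U,V)=\max_{\|\psi\|=1}\big(1-|\langle\psi,U^\dagger V\psi\rangle|^2\big)^{1/2}=\big(1-\min_{\|\psi\|=1}|\langle\psi,U^\dagger V\psi\rangle|^2\big)^{1/2}$. *)

From HB Require Import structures.
From mathcomp Require Import all_boot all_order all_algebra.
From mathcomp Require Import complex.
From mathcomp Require Import all_classical all_reals all_analysis.
Set Implicit Arguments. Unset Strict Implicit. Unset Printing Implicit Defensive.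
Import Order.TTheory GRing.Theory Num.Theory.
Local Open Scope ring_scope.
Local Open Scope classical_set_scope.

Definition adj {R : rcfType} {m n : nat} (A : 'M[R[i]]_(m, n)) : 'M[R[i]]_(n, m) :=
  (map_mx (@conjc R) A)^T.

Definition unitary {R : rcfType} {n : nat} (U : 'M[R[i]]_n) : Prop :=
  adj U *m U = 1%:M.

Definition cdot {R : rcfType} {n : nat} (u v : 'cV[R[i]]_n) : R[i] :=
  \sum_(i < n) conjc (u i 0) * v i 0.

Definition cabs {R : rcfType} (z : R[i]) : R := Normc.normc z.

Definition vnorm {R : rcfType} {n : nat} (v : 'cV[R[i]]_n) : R :=
  Num.sqrt (\sum_(i < n) cabs (v i 0) ^+ 2).

Definition opnorm {R : realType} {n : nat} (A : 'M[R[i]]_n) : R :=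
  sup [set vnorm (A *m psi) | psi in [set psi : 'cV[R[i]]_n | vnorm psi = 1]].

Definition udist {R : realType} {n : nat} (U V : 'M[R[i]]_n) : R :=
  sup [set Num.sqrt (1 - cabs (cdot psi (adj U *m V *m psi)) ^+ 2)
      | psi in [set psi : 'cV[R[i]]_n | vnorm psi = 1]].

Definition expi {R : realType} (x : R) : R[i] := Complex (cos x) (sin x).

From HB Require Import structures.
From mathcomp Require Import all_boot all_order all_algebra.
From mathcomp Require Import complex spectral.
From mathcomp Require Import all_classical all_reals all_analysis.
From mathcomp Require Import ring lra.
Set Implicit Arguments. Unset Strict Implicit. Unset Printing Implicit Defensive.
Import Order.TTheory GRing.Theory Num.Theory.
Import numFieldNormedType.Exports.
Local Open Scope ring_scope.
Local Open Scope classical_set_scope.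

(* Diagonalize W = U^* V = P^* diag(l) P, with |l_k| = 1.  For unit psi the
   weights q_k = |(P psi)_k|^2 sweep out the whole probability simplex, while
   <psi, W psi> = sum_k q_k l_k and
   |(U - e^{ix} V) psi|^2 = sum_k q_k |1 - e^{ix} l_k|^2.
   Hence D(U,V) = sup_q (1 - |sum_k q_k l_k|^2)^{1/2} and
   ||U - e^{ix} V|| = max_k |1 - e^{ix} l_k|.  The continuous function
   F x = 1/2 max_k |1 - e^{ix} l_k| equals 1 >= D when e^{ix} sends some l_k
   to -1.  If c is the point of the convex hull of the l_k closest to 0, then
   Re (c^* l_k) >= |c|^2 for all k, so for e^{ix} = c^* / |c| every
   |1 - e^{ix} l_k|^2 <= 2 - 2|c| <= 4 (1 - |c|^2), i.e.
   F x <= (1 - |c|^2)^{1/2} <= D.  Conclude by the intermediate value theorem. *)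

Lemma ge0_of_perturbations (R : realFieldType) (s N : R) : 0 <= N ->
  (forall t, 0 < t -> t <= 1 -> 0 <= t * (2 * s + t * N)) -> 0 <= s.
Proof.
move=> N0 pert; rewrite leNgt; apply/negP => s_lt0.
pose t := Num.min 1 (- s / (N + 1)).
have N1 : 0 < N + 1 by lra.
have t_gt0 : 0 < t by rewrite lt_min ltr01 divr_gt0 // oppr_gt0.
have t_le1 : t <= 1 by rewrite ge_min lexx.
have t_le : t <= - s / (N + 1) by rewrite ge_min lexx orbT.
have tN : t * N <= - s.
  apply: le_trans (ler_wpM2r N0 t_le) _.
  by rewrite mulrAC ler_pdivrMr // ler_wpM2l; lra.
have := pert t t_gt0 t_le1.
by rewrite pmulr_rge0 //; lra.
Qed.

Section Simplex.
Variables (R : realType) (n : nat).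
Implicit Types (p q : 'rV[R]_n).

Definition simplex : set 'rV[R]_n :=
  [set q | (forall k, 0 <= q 0 k) /\ \sum_k q 0 k = 1].

Definition wsum (a : 'I_n -> R) (q : 'rV[R]_n) := \sum_k a k * q 0 k.

Lemma wsum_delta (a : 'I_n -> R) k : wsum a (delta_mx 0 k) = a k.
Proof.
rewrite /wsum (bigD1 k) //= big1 ?mxE ?eqxx ?mulr1 ?addr0 // => j /negbTE jk.
by rewrite mxE jk mulr0.
Qed.

Lemma wsum1 q : wsum (fun=> 1) q = \sum_k q 0 k.
Proof. by apply: eq_bigr => k _; rewrite mul1r. Qed.

Lemma wsumD (a : 'I_n -> R) p q : wsum a (p + q) = wsum a p + wsum a q.
Proof. by rewrite /wsum -big_split; apply: eq_bigr => k _; rewrite mxE mulrDr. Qed.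

Lemma wsumZ (a : 'I_n -> R) c q : wsum a (c *: q) = c * wsum a q.
Proof. by rewrite /wsum mulr_sumr; apply: eq_bigr => k _; rewrite mxE mulrCA. Qed.

Lemma simplex_convex p q t : simplex p -> simplex q -> 0 <= t <= 1 ->
  simplex ((1 - t) *: p + t *: q).
Proof.
move=> [p0 p1] [q0 q1] /andP[t0 t1]; split=> [k|].
  by rewrite !mxE addr_ge0 // mulr_ge0 // subr_ge0.
by rewrite -wsum1 wsumD !wsumZ !wsum1 p1 q1; ring.
Qed.

Lemma simplex_delta k : simplex (delta_mx 0 k).
Proof.
split=> [j|]; first by rewrite mxE ler0n.
by rewrite -wsum1 wsum_delta.
Qed.

Lemma simplex_neq0 : (0 < n)%N -> simplex !=set0.
Proof. by move=> n0; exists (delta_mx 0 (Ordinal n0)); exact: simplex_delta. Qed.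

Lemma simplex_le1 q k : simplex q -> q 0 k <= 1.
Proof. by move=> [q0 <-]; rewrite (bigD1 k) //= lerDl sumr_ge0. Qed.

Lemma wsum_le (a : 'I_n -> R) q M : simplex q -> (forall k, a k <= M) ->
  wsum a q <= M.
Proof.
move=> [q0 q1] aM; rewrite -[M]mulr1 -q1 mulr_sumr.
by apply: ler_sum => k _; exact: ler_wpM2r.
Qed.

Lemma wsum_continuous (a : 'I_n -> R) : continuous (wsum a).
Proof.
rewrite /wsum.
apply: (@continuous_big R _ +%R 0 xpredT _ _ (index_enum _)
  (fun k (q : 'rV[R]_n) => a k * q 0 k)).
  exact: add_continuous.
move=> k _ q; apply: continuousM; [exact: cst_continuous | exact: coord_continuous].
Qed.

Lemma simplex_compact : compact simplex.
Proof.
have box := @rV_compact R n (fun=> `[0 : R, 1]) (fun=> @segment_compact R 0 1).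
apply: (subclosed_compact _ box); last first.
  by move=> q Sq k /=; rewrite in_itv /= simplex_le1 // andbT; case: Sq.
have -> : simplex = \bigcap_k ((fun q : 'rV[R]_n => q 0 k) @^-1` [set x | 0 <= x])
    `&` ((fun q : 'rV[R]_n => wsum (fun=> 1) q) @^-1` [set 1]).
  apply/seteqP; split=> q /=; rewrite wsum1 => -[q0 q1]; split=> // k.
    by move=> _; exact: q0.
  by apply: q0.
apply: closedI.
  apply: closed_bigI => k _; apply: preimage_closed; last exact: closed_ge.
  by move=> x _; exact: coord_continuous.
apply: preimage_closed; last exact: closed_eq.
by move=> x _; exact: wsum_continuous.
Qed.

End Simplex.
Arguments simplex {R n}.

Lemma sup_eq_max (R : realType) (E : set R) x : E x -> ubound E x -> sup E = x.
Proof.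
move=> Ex ubx; apply/le_anti; rewrite ge_sup //=; last by exists x.
by apply: ub_le_sup => //; exists x.
Qed.

Section SimplexExtrema.
Variables (R : realType) (n : nat).
Implicit Types (a b f : 'I_n -> R).

Lemma simplex_closest_point a b : (0 < n)%N ->
  exists2 p, simplex p & forall k,
    wsum a p ^+ 2 + wsum b p ^+ 2 <= wsum a p * a k + wsum b p * b k.
Proof.
move=> n0.
have phi_cont : continuous (fun q => wsum a q * wsum a q + wsum b q * wsum b q).
  move=> q; apply: (@continuousD R R^o _ (fun q => wsum a q * wsum a q));
  apply: continuousM; exact: wsum_continuous.
have [p /[!inE] Sp pmin] := EVT_min_rV (@simplex_neq0 R n n0)
  (@simplex_compact R n) (continuous_subspaceT phi_cont).
exists p => // k.
set A := wsum a p; set B := wsum b p.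
suff : 0 <= A * (a k - A) + B * (b k - B) by lra.
(* first-order optimality of [p] in the direction of the vertex [k] *)
apply: (@ge0_of_perturbations _ _ ((a k - A) ^+ 2 + (b k - B) ^+ 2)).
  by rewrite addr_ge0 ?sqr_ge0.
move=> t t0 t1.
have Sq : simplex ((1 - t) *: p + t *: delta_mx 0 k).
  by apply: simplex_convex => //; [exact: simplex_delta | rewrite ltW].
have := pmin _ (mem_set Sq); rewrite !wsumD !wsumZ !wsum_delta -/A -/B.
nra.
Qed.

Lemma sup_sqrt_wsum f : (0 < n)%N -> (forall k, 0 <= f k) ->
  sup [set Num.sqrt (wsum f q) | q in simplex] = Num.sqrt (\big[Num.max/0]_k f k).
Proof.
move=> n0 f0.
have [k0 _ max_k0] : {k0 | k0 \in xpredT & \big[Num.max/0]_k f k = f k0}.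
  exact: eq_bigmax (Ordinal n0) _ _ _ (fun k _ => f0 k).
rewrite max_k0; apply: sup_eq_max.
  by exists (delta_mx 0 k0); rewrite ?wsum_delta //; exact: simplex_delta.
move=> _ [q Sq <-]; rewrite ler_sqrt ?f0 //; apply: wsum_le => // k.
by rewrite -max_k0; exact: le_bigmax.
Qed.

End SimplexExtrema.

Lemma exists_angle (R : realType) (c s : R) : c ^+ 2 + s ^+ 2 = 1 ->
  exists x, cos x = c /\ sin x = s.
Proof.
move=> cs1.
have c_itv : -1 <= c <= 1 by apply/andP; split; nra.
have sin_acos_c : sin (acos c) = `|s|.
  by rewrite sin_acos // -sqrtr_sqr; congr Num.sqrt; lra.
have [s0|s0] := leP 0 s.
  by exists (acos c); rewrite acosK ?in_itv //= sin_acos_c ger0_norm.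
exists (- acos c); rewrite cosN sinN acosK ?in_itv //= sin_acos_c ltr0_norm //.
by split => //; lra.
Qed.

Lemma continuous_IVT (R : realType) (f : R -> R) x y v : continuous f ->
  f x <= v <= f y -> exists z, f z = v.
Proof.
move=> f_cont /andP[fxv fyv].
have f_cont_in u w : {within `[u, w], continuous f} by exact: continuous_subspaceT.
have [xy|yx] := leP x y.
  have [|z _ fz] := @IVT R f x y v xy (f_cont_in x y); last by exists z.
  by rewrite ge_min fxv le_max fyv orbT.
have [|z _ fz] := @IVT R f y x v (ltW yx) (f_cont_in y x); last by exists z.
by rewrite ge_min fxv orbT le_max fyv.
Qed.

Lemma half_sqrt_le (R : rcfType) (M y : R) : 0 <= y -> M <= 4 * y ->
  2^-1 * Num.sqrt M <= Num.sqrt y.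
Proof.
move=> y0 My.
have sqrt4y : Num.sqrt (4 * y) = 2 * Num.sqrt y.
  by rewrite sqrtrM ?ler0n // (_ : 4 = 2 ^+ 2) ?sqrtr_sqr ?ger0_norm //; ring.
have : Num.sqrt M <= 2 * Num.sqrt y by rewrite -sqrt4y ler_sqrt // mulr_ge0.
have := sqrtr_ge0 y; lra.
Qed.

Section UnitCircle.
Variables (R : realType) (n : nat) (a b : 'I_n -> R).
Hypothesis ab1 : forall k, a k ^+ 2 + b k ^+ 2 = 1.

(* [re_rot x k] and [chord x k] are [Re (e^{ix} l_k)] and [|1 - e^{ix} l_k|^2]
   for the unit complex number [l_k = a k + i b k]. *)
Definition re_rot x k := cos x * a k - sin x * b k.

Definition chord x k := 2 - 2 * re_rot x k.

Definition max_chord x := \big[Num.max/0]_k chord x k.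

Definition udist_values :=
  [set Num.sqrt (1 - (wsum a q ^+ 2 + wsum b q ^+ 2)) | q in simplex].

Lemma re_rot_bound x k : -1 <= re_rot x k <= 1.
Proof.
have rot1 : re_rot x k ^+ 2 + (cos x * b k + sin x * a k) ^+ 2 = 1.
  by rewrite -(ab1 k) -[RHS]mul1r -(cos2Dsin2 x) /re_rot; ring.
move: rot1; set r := re_rot x k; set s := cos x * b k + sin x * a k => rot1.
have := sqr_ge0 s; have := sqr_ge0 (r - 1); have := sqr_ge0 (r + 1).
by move=> *; apply/andP; split; nra.
Qed.

Lemma chord_ge0 x k : 0 <= chord x k.
Proof. by have /andP[] := re_rot_bound x k; rewrite /chord; lra. Qed.

Lemma chord_le4 x k : chord x k <= 4.
Proof. by have /andP[] := re_rot_bound x k; rewrite /chord; lra. Qed.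

Lemma continuous_half_sqrt_max_chord :
  continuous (fun x => 2^-1 * Num.sqrt (max_chord x)).
Proof.
have chord_cont k : continuous (chord^~ k).
  move=> x; rewrite /chord /re_rot.
  apply: (@continuousB R R^o R (fun=> 2)
    (fun x => 2 * (cos x * a k - sin x * b k))).
    exact: cst_continuous.
  apply: continuousM; first exact: cst_continuous.
  apply: (@continuousB R R^o R (fun x => cos x * a k) (fun x => sin x * b k)).
    by apply: continuousM; [exact: continuous_cos | exact: cst_continuous].
  by apply: continuousM; [exact: continuous_sin | exact: cst_continuous].
have max_chord_cont : continuous max_chord.
  apply: (@continuous_big R _ Num.max 0 xpredT max_continuous R (index_enum _)
    (fun k x => chord x k)).
  by move=> k _; exact: chord_cont.
move=> x; apply: (continuousM (s := fun=> 2^-1) (t := Num.sqrt \o max_chord)).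
  exact: cst_continuous.
by apply: continuous_comp; [exact: max_chord_cont | exact: sqrt_continuous].
Qed.

Lemma half_sqrt_max_chord_le x y : 0 <= y -> (forall k, chord x k <= 4 * y) ->
  2^-1 * Num.sqrt (max_chord x) <= Num.sqrt y.
Proof.
move=> y0 chord_le; apply: half_sqrt_le => //.
by apply/bigmax_leP; split; [rewrite mulr_ge0 | move=> k _; exact: chord_le].
Qed.

Lemma udist_values_ubound : ubound udist_values 1.
Proof.
move=> _ [q _ <-]; rewrite -[X in _ <= X]sqrtr1 ler_sqrt ?ler01 //.
by have := sqr_ge0 (wsum a q); have := sqr_ge0 (wsum b q); lra.
Qed.

Lemma half_sqrt_max_chord_antipodal : (0 < n)%N ->
  exists x, 1 <= 2^-1 * Num.sqrt (max_chord x).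
Proof.
move=> n0; pose k0 := Ordinal n0.
have [x [cx sx]] : exists x, cos x = - a k0 /\ sin x = b k0.
  by apply: exists_angle; rewrite sqrrN.
exists x.
have chord4 : chord x k0 = 4 by rewrite /chord /re_rot cx sx; have := ab1 k0; nra.
have max4 : 4 <= max_chord x by rewrite -chord4; exact: le_bigmax.
have sqrt4 : Num.sqrt 4 = 2 :> R.
  by rewrite (_ : 4 = 2 ^+ 2) ?sqrtr_sqr ?ger0_norm //; ring.
have : Num.sqrt 4 <= Num.sqrt (max_chord x).
  by rewrite ler_sqrt // (le_trans _ max4).
by rewrite sqrt4; lra.
Qed.

(* [x] points [e^{ix}] towards the conjugate of the point of the convex hull of
   the [l_k] closest to the origin. *)
Lemma half_sqrt_max_chord_closest : (0 < n)%N ->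
  exists x, 2^-1 * Num.sqrt (max_chord x) <= sup udist_values.
Proof.
move=> n0; have [p Sp p_closest] := simplex_closest_point a b n0.
set A := wsum a p in p_closest *; set B := wsum b p in p_closest *.
have le_sup : Num.sqrt (1 - (A ^+ 2 + B ^+ 2)) <= sup udist_values.
  by apply: ub_le_sup; [exists 1; exact: udist_values_ubound | exists p].
suff [x Fx] : exists x,
    2^-1 * Num.sqrt (max_chord x) <= Num.sqrt (1 - (A ^+ 2 + B ^+ 2)).
  by exists x; exact: le_trans le_sup.
have [AB0|AB_neq0] := eqVneq (A ^+ 2 + B ^+ 2) 0.
  exists 0; rewrite AB0 subr0; apply: half_sqrt_max_chord_le => // k.
  by rewrite mulr1; exact: chord_le4.
pose c := Num.sqrt (A ^+ 2 + B ^+ 2).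
have c_gt0 : 0 < c by rewrite sqrtr_gt0 lt_def AB_neq0 addr_ge0 ?sqr_ge0.
have cc : c ^+ 2 = A ^+ 2 + B ^+ 2 by rewrite sqr_sqrtr // addr_ge0 ?sqr_ge0.
have [x [cx sx]] : exists x, cos x = A / c /\ sin x = - B / c.
  apply: exists_angle; rewrite !expr_div_n sqrrN -mulrDl -cc mulfV //.
  by rewrite expf_neq0 // gt_eqF.
have c_le_rot k : c <= re_rot x k.
  have -> : re_rot x k = (A * a k + B * b k) / c.
    by rewrite /re_rot cx sx; field; rewrite gt_eqF.
  by rewrite ler_pdivlMr // -expr2 cc; exact: p_closest.
have c_le1 : c <= 1.
  have /andP[_] := re_rot_bound x (Ordinal n0).
  by have := c_le_rot (Ordinal n0); lra.
exists x; apply: half_sqrt_max_chord_le => [|k]; first by rewrite -cc subr_ge0; nra.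
by rewrite -cc /chord; have := c_le_rot k; nra.
Qed.

Theorem udist_values_sup : (0 < n)%N ->
  exists x, sup udist_values = 2^-1 * Num.sqrt (max_chord x).
Proof.
move=> n0.
have [x1 F1] := half_sqrt_max_chord_closest n0.
have [x0 F0] := half_sqrt_max_chord_antipodal n0.
have D1 : sup udist_values <= 1.
  apply: ge_sup udist_values_ubound.
  by have [q Sq] := @simplex_neq0 R n n0; eexists; exists q.
have between : 2^-1 * Num.sqrt (max_chord x1) <= sup udist_values
    <= 2^-1 * Num.sqrt (max_chord x0) by rewrite F1 (le_trans D1 F0).
have [x Fx] := continuous_IVT continuous_half_sqrt_max_chord between.
by exists x.
Qed.

End UnitCircle.

Local Open Scope complex_scope.

Section ComplexMatrices.
Variable R : rcfType.
Implicit Types (z : R[i]).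

Lemma mul_conjc_self z : conjc z * z = (cabs z ^+ 2)%:C.
Proof.
case: z => x y; rewrite /cabs /Normc.normc sqr_sqrtr ?addr_ge0 ?sqr_ge0 //=.
by congr Complex; ring.
Qed.

Lemma cabs_ge0 z : 0 <= cabs z.
Proof. by case: z => x y; exact: sqrtr_ge0. Qed.

Lemma cabs_sqr z : cabs z ^+ 2 = complex.Re z ^+ 2 + complex.Im z ^+ 2.
Proof.
by case: z => x y; rewrite /cabs /Normc.normc sqr_sqrtr ?addr_ge0 ?sqr_ge0.
Qed.

Lemma Re_sum n (F : 'I_n -> R[i]) :
  complex.Re (\sum_k F k) = \sum_k complex.Re (F k).
Proof. by elim/big_rec2: _ => // k y1 y2 _ <-; case: (F k); case: y2. Qed.

Lemma Im_sum n (F : 'I_n -> R[i]) :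
  complex.Im (\sum_k F k) = \sum_k complex.Im (F k).
Proof. by elim/big_rec2: _ => // k y1 y2 _ <-; case: (F k); case: y2. Qed.

Lemma adjM m n p (A : 'M[R[i]]_(m, n)) (B : 'M[R[i]]_(n, p)) :
  adj (A *m B) = adj B *m adj A.
Proof. by rewrite /adj map_mxM trmx_mul. Qed.

Lemma adjK m n (A : 'M[R[i]]_(m, n)) : adj (adj A) = A.
Proof. by apply/matrixP => i j; rewrite !mxE conjcK. Qed.

Lemma unitary_adj n (A : 'M[R[i]]_n) : unitary A -> unitary (adj A).
Proof. by move=> uA; rewrite /unitary adjK; exact: mulmx1C. Qed.

Lemma unitary_mul n (A B : 'M[R[i]]_n) :
  unitary A -> unitary B -> unitary (A *m B).
Proof.
by move=> uA uB; rewrite /unitary adjM mulmxA -(mulmxA _ _ A) uA mulmx1 uB.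
Qed.

Lemma unitary_normal n (A : 'M[R[i]]_n) : unitary A -> A \is normalmx.
Proof.
move=> uA; apply/normalmxP; rewrite -map_trmx.
by rewrite [A *m _]mulmx1C uA.
Qed.

Variable n : nat.
Implicit Types (u v y : 'cV[R[i]]_n) (A : 'M[R[i]]_n).

Definition sqnorm y := \sum_k cabs (y k 0) ^+ 2.

Lemma sqnorm_ge0 y : 0 <= sqnorm y.
Proof. by apply: sumr_ge0 => k _; exact: sqr_ge0. Qed.

Lemma vnorm_eq1 y : vnorm y = 1 <-> sqnorm y = 1.
Proof.
split=> [y1|y1]; last by rewrite /vnorm -/(sqnorm y) y1 sqrtr1.
by rewrite -(sqr_sqrtr (sqnorm_ge0 y)) [Num.sqrt _]y1 expr1n.
Qed.

Lemma cdot_mulmxl A u v : cdot (A *m u) v = cdot u (adj A *m v).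
Proof.
have cdotE u' v' : cdot u' v' = (adj u' *m v') 0 0.
  by rewrite /cdot mxE; apply: eq_bigr => k _; rewrite !mxE.
by rewrite !cdotE adjM mulmxA.
Qed.

Lemma cdot_self y : cdot y y = (sqnorm y)%:C.
Proof.
by rewrite /cdot /sqnorm rmorph_sum; apply: eq_bigr => k _; exact: mul_conjc_self.
Qed.

Lemma sqnorm_unitary A y : unitary A -> sqnorm (A *m y) = sqnorm y.
Proof.
move=> uA; apply: (@complexI R).
by rewrite -!cdot_self cdot_mulmxl mulmxA uA mul1mx.
Qed.

Lemma sqnorm_diag (d : 'rV[R[i]]_n) y :
  sqnorm (diag_mx d *m y) = \sum_k cabs (d 0 k) ^+ 2 * cabs (y k 0) ^+ 2.
Proof.
rewrite /sqnorm mul_diag_mx; apply: eq_bigr => k _.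
by rewrite mxE /cabs Normc.normcM exprMn.
Qed.

Lemma cdot_diag (d : 'rV[R[i]]_n) y :
  cdot y (diag_mx d *m y) = \sum_k d 0 k * (cabs (y k 0) ^+ 2)%:C.
Proof.
rewrite /cdot mul_diag_mx; apply: eq_bigr => k _.
by rewrite mxE -mul_conjc_self mulrCA.
Qed.

Lemma normal_spectral_decomposition A : A \is normalmx ->
  A = adj (spectralmx A) *m diag_mx (spectral_diag A) *m spectralmx A.
Proof.
move=> nA; have := orthomx_spectralP nA.
by rewrite invmx_unitary ?spectral_unitarymx // -map_trmx.
Qed.

Lemma unitary_adj_spectralmx A : unitary (adj (spectralmx A)).
Proof.
by have /unitarymxP := spectral_unitarymx A; rewrite -map_trmx /unitary adjK.
Qed.

Lemma unitary_spectral_diag A k : unitary A -> cabs (spectral_diag A 0 k) = 1.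
Proof.
move=> uA; set P := spectralmx A; pose e : 'cV[R[i]]_n := delta_mx k 0.
have sum_e (F : 'I_n -> R) : \sum_j F j * cabs (e j 0) ^+ 2 = F k.
  rewrite (bigD1 k) // big1 => [|j /negbTE jk]; last first.
    by rewrite mxE jk mulr0n /cabs Normc.normc0 expr0n mulr0.
  by rewrite mxE !eqxx mulr1n /cabs Normc.normc1 expr1n mulr1; exact: addr0.
have uPadj := unitary_adj_spectralmx A.
have uP : unitary P by rewrite -[P]adjK; exact: unitary_adj.
have := sqnorm_unitary (adj P *m e) uA.
rewrite {1}(normal_spectral_decomposition (unitary_normal uA)) -/P -!mulmxA.
rewrite (mulmxA P) [P *m _]mulmx1C // mul1mx !(sqnorm_unitary _ uPadj).
rewrite sqnorm_diag sum_e.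
have -> : sqnorm e = 1.
  by rewrite -(sum_e (fun=> 1)); apply: eq_bigr => j _; rewrite mul1r.
by move/eqP; rewrite sqrp_eq1 ?cabs_ge0 // => /eqP.
Qed.

End ComplexMatrices.

Lemma Re_mul_real (R : rcfType) (z : R[i]) (r : R) :
  complex.Re (z * r%:C) = complex.Re z * r.
Proof. by case: z => p q /=; ring. Qed.

Lemma Im_mul_real (R : rcfType) (z : R[i]) (r : R) :
  complex.Im (z * r%:C) = complex.Im z * r.
Proof. by case: z => p q /=; ring. Qed.

Lemma cabs_real_sqr (R : rcfType) (r : R) : cabs r%:C ^+ 2 = r ^+ 2.
Proof. by rewrite cabs_sqr /=; ring. Qed.

Lemma cabs_sqr_1B_expi (R : realType) x (z : R[i]) : cabs z = 1 ->
  cabs (1 - expi x * z) ^+ 2 =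
  2 - 2 * (cos x * complex.Re z - sin x * complex.Im z).
Proof.
move=> /(congr1 (fun r => r ^+ 2)); rewrite cabs_sqr expr1n.
case: z => p q pq1; rewrite cabs_sqr /=; move: pq1 => /= pq1.
transitivity (1 - 2 * (cos x * p - sin x * q)
              + (cos x ^+ 2 + sin x ^+ 2) * (p ^+ 2 + q ^+ 2)); first ring.
by rewrite cos2Dsin2 pq1; ring.
Qed.

Section UnitaryPair.
Variables (R : realType) (n : nat) (U V : 'M[R[i]]_n).
Hypotheses (uU : unitary U) (uV : unitary V).

Let W := adj U *m V.
Let P := spectralmx W.
Let eig := spectral_diag W.
Let a k := complex.Re (eig 0 k).
Let b k := complex.Im (eig 0 k).

Let uW : unitary W := unitary_mul (unitary_adj uU) uV.
Let uPadj : unitary (adj P) := unitary_adj_spectralmx W.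
Let uP : unitary P.
Proof. by rewrite -[P]adjK; exact: unitary_adj. Qed.
Let W_spectral : W = adj P *m diag_mx eig *m P.
Proof. exact: normal_spectral_decomposition (unitary_normal uW). Qed.

Lemma spectral_diag_unit_circle k : a k ^+ 2 + b k ^+ 2 = 1.
Proof. by rewrite -cabs_sqr unitary_spectral_diag // expr1n. Qed.

Definition weights (psi : 'cV[R[i]]_n) : 'rV[R]_n :=
  \row_k cabs ((P *m psi) k 0) ^+ 2.

Lemma weights_image : weights @` [set psi | vnorm psi = 1] = simplex.
Proof.
apply/seteqP; split=> [_ [psi /vnorm_eq1 psi1 <-]|q [q0 q1]].
  split=> [k|]; first by rewrite mxE sqr_ge0.
  by rewrite -psi1 -(sqnorm_unitary psi uP); apply: eq_bigr => k _; rewrite mxE.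
pose phi : 'cV[R[i]]_n := \col_k (Num.sqrt (q 0 k))%:C.
have phi_sqr k : cabs (phi k 0) ^+ 2 = q 0 k by rewrite mxE cabs_real_sqr sqr_sqrtr.
exists (adj P *m phi).
  apply/vnorm_eq1; rewrite sqnorm_unitary // -q1.
  by apply: eq_bigr => k _; exact: phi_sqr.
by apply/rowP => k; rewrite mxE mulmxA [P *m _]mulmx1C // mul1mx phi_sqr.
Qed.

Lemma cdot_W psi : cabs (cdot psi (W *m psi)) ^+ 2 =
  wsum a (weights psi) ^+ 2 + wsum b (weights psi) ^+ 2.
Proof.
rewrite W_spectral -!mulmxA -cdot_mulmxl cdot_diag cabs_sqr Re_sum Im_sum.
by congr (_ ^+ _ + _ ^+ _); apply: eq_bigr => k _;
  rewrite ?Re_mul_real ?Im_mul_real [weights _ _ _]mxE.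
Qed.

Lemma vnorm_sub_rot x psi : vnorm ((U - expi x *: V) *m psi) =
  Num.sqrt (wsum (chord a b x) (weights psi)).
Proof.
pose d : 'rV[R[i]]_n := \row_k (1 - expi x * eig 0 k).
have -> : U - expi x *: V = U *m (adj P *m diag_mx d *m P).
  have -> : diag_mx d = 1%:M - expi x *: diag_mx eig.
    by apply/matrixP => i j; rewrite !mxE; case: (i == j) => /=; ring.
  rewrite mulmxBr mulmx1 mulmxBl mulmxBr [adj P *m P]uP mulmx1.
  rewrite -scalemxAr -scalemxAl -W_spectral -scalemxAr mulmxA [U *m _]mulmx1C //.
  by rewrite mul1mx.
rewrite /vnorm -/(sqnorm _) -!mulmxA (sqnorm_unitary _ uU) (sqnorm_unitary _ uPadj).
rewrite sqnorm_diag.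
congr Num.sqrt; apply: eq_bigr => k _.
by rewrite !mxE cabs_sqr_1B_expi ?unitary_spectral_diag.
Qed.

Lemma udist_spectral : udist U V = sup (udist_values a b).
Proof.
rewrite /udist /udist_values -weights_image image_comp; congr sup.
by apply: eq_imagel => psi _ /=; rewrite cdot_W.
Qed.

Lemma opnorm_spectral x : (0 < n)%N ->
  opnorm (U - expi x *: V) = Num.sqrt (max_chord a b x).
Proof.
move=> n0; rewrite -sup_sqrt_wsum //; last first.
  by move=> k; exact: (chord_ge0 spectral_diag_unit_circle).
rewrite /opnorm -weights_image image_comp; congr sup.
by apply: eq_imagel => psi _ /=; rewrite vnorm_sub_rot.
Qed.

End UnitaryPair.

Theorem mainTheorem6 (R : realType) (n : nat) (U V : 'M[R[i]]_n) :
  (0 < n)%N -> unitary U -> unitary V ->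
  exists x : R, udist U V = 2^-1 * opnorm (U - expi x *: V).
Proof.
move=> n0 uU uV.
have [x udist_x] := udist_values_sup (spectral_diag_unit_circle uU uV) n0.
by exists x; rewrite (udist_spectral uU uV) udist_x (opnorm_spectral uU uV).
Qed.
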